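(* Let $g>0$, let $\hat\nu:\mathbb R\to[\nu_0,\nu_1]$ be a stretch-limiting constitutive function as in the context, and let $a>0$, $b\in\mathbb R$ with $a^2+b^2<\nu_0^2$. Let $\gamma_n>0$ with $\gamma_n\to0$, and for each $n$ let $\lambda_n<0$, $\mu_n\in\mathbb R$ satisfy $$a\mathbf i+b\mathbf k=\int_0^1\frac{\hat\nu(-\delta_n(s))}{-\delta_n(s)}\big(\lambda_n\mathbf i+(\mu_n+g\gamma_n s)\mathbf k\big)\,ds,\qquad \delta_n(s)=\sqrt{\lambda_n^2+(\mu_n+g\gamma_n s)^2}.$$ Then $\lim_{n\to\infty}\sqrt{\lambda_n^2+\mu_n^2}=0$.
   Context: Stretch-limited constitutive function: constants $N_0<0<N_1$, $0<\nu_0<1<\nu_1$ with $\hat\nu(N)=\nu_0$ for $N\le N_0$, $\hat\nu(N)=\nu_1$ for $N\ge N_1$, $\hat\nu\in C^\infty([N_0,N_1];[\nu_0,\nu_1])$, $\hat\nu(0)=1$, $\hat\nu'\ge c>0$ on $[N_0,N_1]$. The equation describes a compressive uniform catenary with mass $\gamma_n$ per unit reference length and supports at $\mathbf 0$ and $a\mathbf i+b\mathbf k$. *)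

From Stdlib Require Import Reals.
From Coquelicot Require Import Coquelicot.
Open Scope R_scope.

Definition stretch_limited (nu : R -> R) (N0 N1 nu0 nu1 : R) : Prop :=
  N0 < 0 < N1 /\ 0 < nu0 < 1 /\ 1 < nu1 /\
  (forall N, nu0 <= nu N <= nu1) /\
  (forall N, N <= N0 -> nu N = nu0) /\
  (forall N, N1 <= N -> nu N = nu1) /\
  nu 0 = 1 /\
  exists (f : R -> R) (c : R), 0 < c /\
    (forall (k : nat) (x : R), ex_derive_n f k x) /\
    (forall N, N0 <= N <= N1 -> nu N = f N /\ c <= Derive f N).

Definition delta (g gam lam mu s : R) : R :=
  sqrt (lam ^ 2 + (mu + g * gam * s) ^ 2).

From Stdlib Require Import Reals Lra Psatz.
From Coquelicot Require Import Coquelicot.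
Open Scope R_scope.

(* Write d = |(lam, mu)| and k = g gam.  On [0, 1] the tension satisfies
   delta <= d + k, so the weight nu(-delta)/delta is at least nu0/(d + k), while
   the projection of the load (lam, mu + k s) onto (lam, mu) is at least d (d - k).
   Projecting the end-point identity onto (lam, mu) thus gives
   lam a + mu b <= - nu0 d (d - k)/(d + k), and Cauchy-Schwarz bounds the left
   side below by - d |(a, b)|.  As |(a, b)| < nu0, this forces
   d <= k (nu0 + |(a, b)|)/(nu0 - |(a, b)|), which tends to 0 with gam. *)

Lemma Rmax_Rabs (y c : R) : Rmax y c = (y + c + Rabs (y - c)) / 2.
Proof.
destruct (Rle_dec c y).
- rewrite Rmax_left, Rabs_right by lra; field.
- rewrite Rmax_right, Rabs_left by lra; field.
Qed.

Lemma continuous_Rmax_l (c x : R) : continuous (fun y => Rmax y c) x.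
Proof.
apply (continuous_ext (fun y => (y + c + Rabs (y - c)) / 2)).
- intro y; symmetry; apply Rmax_Rabs.
- apply (continuous_mult (fun y => y + c + Rabs (y - c)) (fun _ => / 2)).
  + apply (continuous_plus (fun y => y + c) (fun y => Rabs (y - c))).
    * apply (ex_derive_continuous (K := R_AbsRing) (V := R_NormedModule)).
      auto_derive; trivial.
    * apply continuous_Rabs_comp.
      apply (ex_derive_continuous (K := R_AbsRing) (V := R_NormedModule)).
      auto_derive; trivial.
  + apply continuous_const.
Qed.

Lemma stretch_limited_continuous_below (nu : R -> R) (N0 N1 nu0 nu1 : R) :
  stretch_limited nu N0 N1 nu0 nu1 ->
  exists h : R -> R, (forall y, continuous h y) /\ (forall y, y <= N1 -> nu y = h y).
Proof.
intros (HN & _ & _ & _ & nu_lo & _ & _ & f & ? & _ & f_smooth & nu_f).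
exists (fun y => f (Rmax y N0)); split.
- intro y; apply (continuous_comp (fun y => Rmax y N0) f).
  + apply continuous_Rmax_l.
  + apply (ex_derive_continuous (K := R_AbsRing) (V := R_NormedModule)).
    exact (f_smooth 1%nat (Rmax y N0)).
- intros y Hy; destruct (Rle_dec y N0).
  + rewrite Rmax_right, nu_lo by lra.
    rewrite <- (nu_lo N0) by lra; now destruct (nu_f N0) as [E _]; [lra |].
  + rewrite Rmax_left by lra; now destruct (nu_f y) as [E _]; [lra |].
Qed.

Lemma RInt_lincomb2 (f g : R -> R) (x y a b : R) :
  ex_RInt f a b -> ex_RInt g a b ->
  RInt (fun s => x * f s + y * g s) a b = x * RInt f a b + y * RInt g a b.
Proof.
intros Hf Hg.
pose proof (RInt_plus (V := R_CompleteNormedModule)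
  (fun s => scal x (f s)) (fun s => scal y (g s)) a b
  (ex_RInt_scal _ _ _ _ Hf) (ex_RInt_scal _ _ _ _ Hg)) as E.
rewrite !(RInt_scal (V := R_CompleteNormedModule)) in E by trivial.
exact E.
Qed.

Lemma ex_RInt_lincomb2 (f g : R -> R) (x y a b : R) :
  ex_RInt f a b -> ex_RInt g a b -> ex_RInt (fun s => x * f s + y * g s) a b.
Proof.
intros Hf Hg.
exact (ex_RInt_plus (V := R_CompleteNormedModule)
  (fun s => scal x (f s)) (fun s => scal y (g s)) a b
  (ex_RInt_scal _ _ _ _ Hf) (ex_RInt_scal _ _ _ _ Hg)).
Qed.

Lemma RInt_le_const (f : R -> R) (a b c : R) :
  a <= b -> ex_RInt f a b -> (forall s, a <= s <= b -> f s <= c) ->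
  RInt f a b <= c * (b - a).
Proof.
intros Hab Hf Hc.
replace (c * (b - a)) with (RInt (fun _ => c) a b)
  by (rewrite (RInt_const (V := R_CompleteNormedModule)); apply Rmult_comm).
apply RInt_le; trivial.
- apply ex_RInt_const.
- intros s Hs; apply Hc; lra.
Qed.

Lemma Rabs_le_sqrt_plus_sqr (x y : R) : Rabs y <= sqrt (x ^ 2 + y ^ 2).
Proof. eapply Rle_trans; [apply Rmax_r | apply sqrt_plus_sqr]. Qed.

Lemma projection_lower_bound (lam mu k s : R) :
  0 <= k -> 0 <= s <= 1 ->
  sqrt (lam ^ 2 + mu ^ 2) * (sqrt (lam ^ 2 + mu ^ 2) - k) <= lam ^ 2 + mu * (mu + k * s).
Proof.
intros Hk Hs.
pose proof (Rabs_le_sqrt_plus_sqr lam mu) as Hmu.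
pose proof (Rabs_maj2 mu); pose proof (Rabs_pos mu).
assert (E : sqrt (lam ^ 2 + mu ^ 2) ^ 2 = lam ^ 2 + mu ^ 2) by (apply pow2_sqrt; nra).
set (d := sqrt (lam ^ 2 + mu ^ 2)) in *.
assert (0 <= k * s <= k) by nra.
assert (0 <= (Rabs mu + mu) * (k * s)) by (apply Rmult_le_pos; lra).
assert (0 <= (d - Rabs mu) * (k * s)) by (apply Rmult_le_pos; lra).
assert (0 <= d * (k - k * s)) by (apply Rmult_le_pos; lra).
nra.
Qed.

Lemma le_of_balance (d k S nu0 : R) :
  0 <= S < nu0 -> nu0 * (d - k) <= S * (d + k) -> d <= k * ((nu0 + S) / (nu0 - S)).
Proof.
intros HS Hbal.
apply Rmult_le_reg_r with (nu0 - S); [lra |].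
replace (k * ((nu0 + S) / (nu0 - S)) * (nu0 - S)) with (k * (nu0 + S)) by (field; lra).
nra.
Qed.

Section ResultantEstimate.

Variables (nu h : R -> R) (nu0 g gam lam mu : R).
Hypothesis nu_ge : forall N, nu0 <= nu N.
Hypothesis nu0_gt0 : 0 < nu0.
Hypothesis nu_h : forall y, y <= 0 -> nu y = h y.
Hypothesis h_cont : forall y, continuous h y.
Hypothesis lam_lt0 : lam < 0.
Hypothesis k_ge0 : 0 <= g * gam.

Local Notation D := (delta g gam lam mu).
Local Notation k := (g * gam).
Local Notation d0 := (sqrt (lam ^ 2 + mu ^ 2)).
Local Notation w s := (nu (- D s) / (- D s)).

Lemma delta_gt0 s : 0 < D s.
Proof. apply sqrt_lt_R0; pose proof (pow2_ge_0 (mu + k * s)); nra. Qed.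

Lemma norm_gt0 : 0 < d0.
Proof. apply sqrt_lt_R0; pose proof (pow2_ge_0 mu); nra. Qed.

Lemma delta_le s : 0 <= s <= 1 -> D s <= d0 + k.
Proof.
intros Hs; unfold delta.
pose proof (Rabs_le_sqrt_plus_sqr lam mu) as Hmu.
pose proof norm_gt0.
rewrite <- (sqrt_pow2 (d0 + k)) by lra.
apply sqrt_le_1_alt.
replace ((d0 + k) ^ 2) with (lam ^ 2 + mu ^ 2 + 2 * d0 * k + k ^ 2)
  by (rewrite <- (pow2_sqrt (lam ^ 2 + mu ^ 2)) at 1 by nra; ring).
pose proof (RRle_abs mu).
assert (0 <= k * s <= k) by nra.
assert (0 <= (Rabs mu - mu) * (k * s)) by (apply Rmult_le_pos; lra).
assert (0 <= (d0 - Rabs mu) * (k * s)) by (apply Rmult_le_pos; lra).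
assert (0 <= d0 * (k - k * s)) by (apply Rmult_le_pos; lra).
assert (0 <= k * k * (1 - s * s)) by (apply Rmult_le_pos; nra).
nra.
Qed.

Lemma continuous_delta s : continuous D s.
Proof.
apply continuous_sqrt_comp.
apply (ex_derive_continuous (K := R_AbsRing) (V := R_NormedModule)).
auto_derive; trivial.
Qed.

Lemma ex_RInt_tension (p : R -> R) :
  (forall s, continuous p s) -> ex_RInt (fun s => w s * p s) 0 1.
Proof.
intros p_cont.
apply ex_RInt_ext with (fun s => h (- D s) / (- D s) * p s).
{ intros s _; rewrite nu_h; [reflexivity |].
  pose proof (delta_gt0 s); lra. }
apply (ex_RInt_continuous (V := R_CompleteNormedModule)); intros s _.
apply (continuous_mult (fun s => h (- D s) / (- D s)) p); [| apply p_cont].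
apply (continuous_mult (fun s => h (- D s)) (fun s => / (- D s))).
- apply (continuous_comp (fun s => - D s) h); [| apply h_cont].
  apply (continuous_opp D), continuous_delta.
- apply continuous_Rinv_comp.
  + apply (continuous_opp D), continuous_delta.
  + pose proof (delta_gt0 s); lra.
Qed.

Lemma resultant_projection_le :
  k <= d0 ->
  lam * RInt (fun s => w s * lam) 0 1 + mu * RInt (fun s => w s * (mu + k * s)) 0 1
  <= - (nu0 * d0 * (d0 - k) / (d0 + k)).
Proof.
intros k_le.
pose proof norm_gt0.
assert (int_lam : ex_RInt (fun s => w s * lam) 0 1)
  by (apply ex_RInt_tension; intro; apply continuous_const).
assert (int_mu : ex_RInt (fun s => w s * (mu + k * s)) 0 1).
{ apply ex_RInt_tension; intro s.
  apply (ex_derive_continuous (K := R_AbsRing) (V := R_NormedModule)).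
  auto_derive; trivial. }
rewrite <- RInt_lincomb2 by assumption.
match goal with |- _ <= ?c => replace c with (c * (1 - 0)) by ring end.
apply RInt_le_const; [lra | apply ex_RInt_lincomb2; assumption | intros s Hs].
pose proof (delta_gt0 s) as D_pos.
pose proof (delta_le s Hs) as D_le.
pose proof (projection_lower_bound lam mu k s k_ge0 Hs) as P_ge.
assert (weight_ge : nu0 / (d0 + k) <= nu (- D s) / D s).
{ unfold Rdiv; apply Rmult_le_compat; try lra.
  - left; apply Rinv_0_lt_compat; lra.
  - apply nu_ge.
  - apply Rinv_le_contravar; lra. }
replace (lam * (w s * lam) + mu * (w s * (mu + k * s)))
  with (- (nu (- D s) / D s * (lam ^ 2 + mu * (mu + k * s)))) by (field; lra).
replace (nu0 * d0 * (d0 - k) / (d0 + k)) with (nu0 / (d0 + k) * (d0 * (d0 - k)))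
  by (field; lra).
apply Ropp_le_contravar, Rmult_le_compat; try lra.
- unfold Rdiv; apply Rmult_le_pos; [lra | left; apply Rinv_0_lt_compat; lra].
- apply Rmult_le_pos; lra.
Qed.

Lemma resultant_norm_bound :
  nu0 * (d0 - k)
  <= sqrt (RInt (fun s => w s * lam) 0 1 ^ 2 + RInt (fun s => w s * (mu + k * s)) 0 1 ^ 2)
     * (d0 + k).
Proof.
set (A := RInt (fun s => w s * lam) 0 1).
set (B := RInt (fun s => w s * (mu + k * s)) 0 1).
pose proof norm_gt0.
pose proof (sqrt_pos (A ^ 2 + B ^ 2)).
destruct (Rlt_le_dec d0 k) as [k_gt | k_le].
{ apply Rle_trans with 0; [nra | apply Rmult_le_pos; lra]. }
assert (CS : - (lam * A + mu * B) <= d0 * sqrt (A ^ 2 + B ^ 2)).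
{ pose proof (sqrt_cauchy (- lam) (- mu) A B) as CS; unfold Rsqr in CS.
  replace (- lam * - lam + - mu * - mu) with (lam ^ 2 + mu ^ 2) in CS by ring.
  replace (A * A + B * B) with (A ^ 2 + B ^ 2) in CS by ring.
  lra. }
pose proof (resultant_projection_le k_le) as P_le; fold A B in P_le.
apply Rmult_le_reg_l with d0; [lra |].
replace (d0 * (nu0 * (d0 - k))) with ((d0 + k) * (nu0 * d0 * (d0 - k) / (d0 + k)))
  by (field; lra).
replace (d0 * (sqrt (A ^ 2 + B ^ 2) * (d0 + k)))
  with ((d0 + k) * (d0 * sqrt (A ^ 2 + B ^ 2))) by ring.
apply Rmult_le_compat_l; lra.
Qed.

End ResultantEstimate.

Theorem lemma4p6
  (g : R) (nu : R -> R) (N0 N1 nu0 nu1 a b : R)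
  (gam lam mu : nat -> R) :
  0 < g ->
  stretch_limited nu N0 N1 nu0 nu1 ->
  0 < a -> a ^ 2 + b ^ 2 < nu0 ^ 2 ->
  (forall n, 0 < gam n) ->
  is_lim_seq gam 0 ->
  (forall n, lam n < 0) ->
  (forall n,
     a = RInt (fun s => nu (- delta g (gam n) (lam n) (mu n) s)
                        / (- delta g (gam n) (lam n) (mu n) s) * lam n) 0 1 /\
     b = RInt (fun s => nu (- delta g (gam n) (lam n) (mu n) s)
                        / (- delta g (gam n) (lam n) (mu n) s)
                        * (mu n + g * gam n * s)) 0 1) ->
  is_lim_seq (fun n => sqrt (lam n ^ 2 + mu n ^ 2)) 0.
Proof.
intros g_pos Hnu _ ab_lt gam_pos gam_lim lam_neg Hab.
destruct (stretch_limited_continuous_below _ _ _ _ _ Hnu) as [h [h_cont nu_h]].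
destruct Hnu as ((_ & N1_pos) & (nu0_pos & _) & _ & nu_bnd & _).
set (S := sqrt (a ^ 2 + b ^ 2)).
assert (S_range : 0 <= S < nu0).
{ split; [apply sqrt_pos |].
  rewrite <- (sqrt_pow2 nu0) by lra.
  apply sqrt_lt_1_alt; split; [nra | exact ab_lt]. }
apply is_lim_seq_le_le with (fun _ => 0) (fun n => g * ((nu0 + S) / (nu0 - S)) * gam n).
- intro n; split; [apply sqrt_pos |].
  replace (g * ((nu0 + S) / (nu0 - S)) * gam n)
    with (g * gam n * ((nu0 + S) / (nu0 - S))) by ring.
  apply le_of_balance; [exact S_range |].
  unfold S; destruct (Hab n) as [-> ->].
  apply (resultant_norm_bound nu h); auto.
  + intro N; apply nu_bnd.
  + intros y Hy; apply nu_h; lra.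
  + pose proof (gam_pos n); nra.
- apply is_lim_seq_const.
- replace (Finite 0) with (Rbar_mult (g * ((nu0 + S) / (nu0 - S))) 0)
    by (simpl; f_equal; ring).
  apply is_lim_seq_scal_l, gam_lim.
Qed.
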